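(* Let $M$ be a surface in $\mathcal{H}^2\times\mathbb{R}$ whose extrinsic curvature and Gaussian curvature both vanish identically, and let $H$ be the mean curvature of $M$. Let $\gamma$ be an asymptotic line of $M$ through parabolic points of $M$, parametrized by arc length $s$. Then along $\gamma$, $$\frac{d^2}{ds^2}\left(\frac{1}{H}\right)=0.$$
   Context: $\mathcal{H}^2$ is the hyperbolic plane of curvature $-1$; $\mathcal{H}^2\times\mathbb{R}$ has the product metric. For a surface $M$ with principal curvatures $k_1,k_2$, the extrinsic curvature is $k_1k_2$, the Gaussian curvature is that of the induced metric, and the mean curvature is $H=(k_1+k_2)/2$. A point is parabolic if exactly one principal curvature is zero and the other nonzero (so $H\neq 0$ there). At a parabolic point the principal direction with principal curvature zero is the asymptotic direction; an asymptotic line is a curve whose tangent vectors are asymptotic directions. *)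

From Stdlib Require Import Reals List.
From Coquelicot Require Import Coquelicot.
Open Scope R_scope.

(** H^2 = upper sheet of the hyperboloid {x : -x0^2+x1^2+x2^2 = -1, x0 > 0}
  in Minkowski space, so H^2 x R sits in R^4 with the Lorentzian form
  <a,b> = -a0 b0 + a1 b1 + a2 b2 + a3 b3, whose restriction to the tangent
  spaces of H^2 x R is the product metric (curvature -1 on H^2). *)

Definition vec4 := nat -> R.
Definition mink (a b : vec4) : R :=
  - a 0%nat * b 0%nat + a 1%nat * b 1%nat + a 2%nat * b 2%nat + a 3%nat * b 3%nat.

Definition pd1 (f : R -> R -> R) : R -> R -> R := fun u v => Derive (fun t => f t v) u.
Definition pd2 (f : R -> R -> R) : R -> R -> R := fun u v => Derive (fun t => f u t) v.

(** Iterated partial derivative along a word of directions (true = d/du). *)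
Fixpoint pdw (w : list bool) (f : R -> R -> R) : R -> R -> R :=
  match w with
  | nil => f
  | b :: w' => if b then pd1 (pdw w' f) else pd2 (pdw w' f)
  end.

Definition smooth_on (U : R * R -> Prop) (f : R -> R -> R) : Prop :=
  forall (w : list bool) (p : R * R), U p ->
    ex_derive (fun t => pdw w f t (snd p)) (fst p) /\
    ex_derive (fun t => pdw w f (fst p) t) (snd p) /\
    continuous (fun q : R * R => pdw w f (fst q) (snd q)) p.

Definition smooth1_on (a b : R) (f : R -> R) : Prop :=
  forall (n : nat) (s : R), a < s < b -> ex_derive_n f n s.

(** A parametrized surface X : U -> R^4 (chart of M), coordinatewise. *)
Definition param := nat -> R -> R -> R.
Definition at_ (X : param) (u v : R) : vec4 := fun i => X i u v.
Definition Xu (X : param) (u v : R) : vec4 := fun i => pd1 (X i) u v.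
Definition Xv (X : param) (u v : R) : vec4 := fun i => pd2 (X i) u v.
Definition Xuu (X : param) (u v : R) : vec4 := fun i => pd1 (pd1 (X i)) u v.
Definition Xuv (X : param) (u v : R) : vec4 := fun i => pd2 (pd1 (X i)) u v.
Definition Xvv (X : param) (u v : R) : vec4 := fun i => pd2 (pd2 (X i)) u v.

Definition EE (X : param) : R -> R -> R := fun u v => mink (Xu X u v) (Xu X u v).
Definition FF (X : param) : R -> R -> R := fun u v => mink (Xu X u v) (Xv X u v).
Definition GG (X : param) : R -> R -> R := fun u v => mink (Xv X u v) (Xv X u v).
Definition detg (X : param) (u v : R) : R := EE X u v * GG X u v - FF X u v ^ 2.

Definition surface_in_H2xR (U : R * R -> Prop) (X : param) : Prop :=
  open U /\
  (forall i, (i < 4)%nat -> smooth_on U (X i)) /\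
  (forall p, U p ->
     - X 0%nat (fst p) (snd p) ^ 2 + X 1%nat (fst p) (snd p) ^ 2
       + X 2%nat (fst p) (snd p) ^ 2 = -1 /\
     0 < X 0%nat (fst p) (snd p) /\
     0 < detg X (fst p) (snd p)).

(** N is a smooth unit normal field of the surface, tangent to H^2 x R
    (the H^2-part of N is orthogonal to the position vector in H^2). *)
Definition unit_normal (U : R * R -> Prop) (X N : param) : Prop :=
  (forall i, (i < 4)%nat -> smooth_on U (N i)) /\
  (forall p, U p ->
     let u := fst p in let v := snd p in
     mink (at_ N u v) (at_ N u v) = 1 /\
     mink (at_ N u v) (Xu X u v) = 0 /\
     mink (at_ N u v) (Xv X u v) = 0 /\
     mink (at_ N u v)
       (fun i => if Nat.eqb i 3 then 0 else X i u v) = 0).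

(** Second fundamental form w.r.t. N (the normal component of the ambient
    second derivative; the Levi-Civita connection of H^2 x R is the
    tangential part of the flat ambient derivative). *)
Definition h11 (X N : param) (u v : R) : R := mink (Xuu X u v) (at_ N u v).
Definition h12 (X N : param) (u v : R) : R := mink (Xuv X u v) (at_ N u v).
Definition h22 (X N : param) (u v : R) : R := mink (Xvv X u v) (at_ N u v).

(** Shape operator S = g^{-1} h acting on coordinates (a,b) of the tangent
    vector a X_u + b X_v. *)
Definition shape (X N : param) (u v : R) (c : R * R) : R * R :=
  let E := EE X u v in let F := FF X u v in let G := GG X u v in
  let D := detg X u v in
  let a := fst c in let b := snd c in
  ((G * (h11 X N u v * a + h12 X N u v * b) - F * (h12 X N u v * a + h22 X N u v * b)) / D,
   (- F * (h11 X N u v * a + h12 X N u v * b) + E * (h12 X N u v * a + h22 X N u v * b)) / D).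

Definition principal_dir (X N : param) (u v k : R) (c : R * R) : Prop :=
  c <> (0, 0) /\ shape X N u v c = (k * fst c, k * snd c).
Definition principal_curvature (X N : param) (u v k : R) : Prop :=
  exists c, principal_dir X N u v k c.

Definition extrinsic_curv (X N : param) (u v : R) : R :=
  (h11 X N u v * h22 X N u v - h12 X N u v ^ 2) / detg X u v.
Definition mean_curv (X N : param) (u v : R) : R :=
  (GG X u v * h11 X N u v - 2 * FF X u v * h12 X N u v + EE X u v * h22 X N u v)
  / (2 * detg X u v).

Definition parabolic (X N : param) (u v : R) : Prop :=
  principal_curvature X N u v 0 /\
  exists k, k <> 0 /\ principal_curvature X N u v k.

Definition asymptotic_dir (X N : param) (u v : R) (c : R * R) : Prop :=
  parabolic X N u v /\ principal_dir X N u v 0 c.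

(** Gaussian curvature of the induced metric (Brioschi formula). *)
Definition det3 (a11 a12 a13 a21 a22 a23 a31 a32 a33 : R) : R :=
  a11 * (a22 * a33 - a23 * a32) - a12 * (a21 * a33 - a23 * a31)
  + a13 * (a21 * a32 - a22 * a31).

Definition gauss_curv (X : param) (u v : R) : R :=
  let E := EE X in let F := FF X in let G := GG X in
  (det3 (- pd2 (pd2 E) u v / 2 + pd2 (pd1 F) u v - pd1 (pd1 G) u v / 2)
        (pd1 E u v / 2) (pd1 F u v - pd2 E u v / 2)
        (pd2 F u v - pd1 G u v / 2) (E u v) (F u v)
        (pd2 G u v / 2) (F u v) (G u v)
   - det3 0 (pd2 E u v / 2) (pd1 G u v / 2)
          (pd2 E u v / 2) (E u v) (F u v)
          (pd1 G u v / 2) (F u v) (G u v))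
  / (detg X u v ^ 2).

Definition curve (X : param) (cu cv : R -> R) : nat -> R -> R :=
  fun i s => X i (cu s) (cv s).

(** Let [P] be the [H^2]-component of the position vector.  In the Lorentzian
    frame [(X_u, X_v, N, P)] of [R^4], Brioschi's formula becomes the Gauss
    equation [K = K_ext - n3^2], where [n3] is the vertical component of the
    unit normal [N].  Hence [K = K_ext = 0] forces [N] to be horizontal.  Then
    [e3] is tangent and [dN(e3) = 0], so the shape operator is [2H] times the
    projection onto the horizontal tangent line: [dN = -2H dX^h] (Rodrigues).
    At a parabolic point the asymptotic direction is therefore vertical, and
    differentiating Rodrigues' formula gives the Codazzi relation
    [H_u X_v^h = H_v X_u^h]; together they say that [H] is constant along
    asymptotic lines, so [1/H] is too. *)

From Stdlib Require Import Reals Lra Lia List.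
From Coquelicot Require Import Coquelicot.
Import ListNotations.
Open Scope R_scope.

Lemma mink_sym (a b : vec4) : mink a b = mink b a.
Proof. unfold mink; ring. Qed.

Lemma mink_ext (a a' b b' : vec4) :
  (forall i, (i < 4)%nat -> a i = a' i) -> (forall i, (i < 4)%nat -> b i = b' i) ->
  mink a b = mink a' b'.
Proof. intros Ha Hb; unfold mink; rewrite !Ha, !Hb by lia; reflexivity. Qed.

Definition e3 : vec4 := fun i => if Nat.eqb i 3 then 1 else 0.

Lemma mink_e3_l (a : vec4) : mink e3 a = a 3%nat.
Proof. unfold mink, e3; simpl; ring. Qed.

Definition det4 (a b c d : vec4) : R :=
  a 0%nat * det3 (b 1%nat) (b 2%nat) (b 3%nat) (c 1%nat) (c 2%nat) (c 3%nat) (d 1%nat) (d 2%nat) (d 3%nat)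
  - a 1%nat * det3 (b 0%nat) (b 2%nat) (b 3%nat) (c 0%nat) (c 2%nat) (c 3%nat) (d 0%nat) (d 2%nat) (d 3%nat)
  + a 2%nat * det3 (b 0%nat) (b 1%nat) (b 3%nat) (c 0%nat) (c 1%nat) (c 3%nat) (d 0%nat) (d 1%nat) (d 3%nat)
  - a 3%nat * det3 (b 0%nat) (b 1%nat) (b 2%nat) (c 0%nat) (c 1%nat) (c 2%nat) (d 0%nat) (d 1%nat) (d 2%nat).

Definition gram_row (x a b c d : vec4) : vec4 :=
  fun j => match j with 0%nat => mink x a | 1%nat => mink x b | 2%nat => mink x c | _ => mink x d end.

Lemma det4_gram (a b c d : vec4) :
  det4 (gram_row a a b c d) (gram_row b a b c d) (gram_row c a b c d) (gram_row d a b c d)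
  = - det4 a b c d ^ 2.
Proof. unfold det4, det3, gram_row, mink; ring. Qed.

Definition set_coord (j : nat) (x : vec4) (s : R) : vec4 :=
  fun k => if Nat.eqb k j then s else x k.

(* Cramer's rule for the system [mink a r = sa, ..., mink d r = sd]; the sign
   comes from the [-] of the Lorentzian form in coordinate 0. *)
Lemma det4_mul_coord (a b c d r : vec4) (j : nat) : (j < 4)%nat ->
  det4 a b c d * r j =
  (if Nat.eqb j 0 then -1 else 1) *
  det4 (set_coord j a (mink a r)) (set_coord j b (mink b r))
       (set_coord j c (mink c r)) (set_coord j d (mink d r)).
Proof.
  intros Hj; destruct j as [|[|[|[|j]]]]; try lia;
    unfold det4, det3, set_coord, mink; simpl; ring.
Qed.

Lemma det4_zero_coord (a b c d : vec4) (j : nat) : (j < 4)%nat ->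
  det4 (set_coord j a 0) (set_coord j b 0) (set_coord j c 0) (set_coord j d 0) = 0.
Proof.
  intros Hj; destruct j as [|[|[|[|j]]]]; try lia;
    unfold det4, det3, set_coord; simpl; ring.
Qed.

Lemma mink_orth_zero (a b c d r : vec4) : det4 a b c d <> 0 ->
  mink a r = 0 -> mink b r = 0 -> mink c r = 0 -> mink d r = 0 ->
  forall i, (i < 4)%nat -> r i = 0.
Proof.
  intros Hdet Ha Hb Hc Hd i Hi.
  apply (Rmult_eq_reg_l (det4 a b c d)); [|exact Hdet].
  rewrite det4_mul_coord, Ha, Hb, Hc, Hd, det4_zero_coord by exact Hi; ring.
Qed.

Record frame (a b n p : vec4) : Prop := {
  frame_plane : mink a a * mink b b - mink a b ^ 2 <> 0;
  frame_nn : mink n n = 1;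
  frame_pp : mink p p = -1;
  frame_na : mink n a = 0;
  frame_nb : mink n b = 0;
  frame_pa : mink p a = 0;
  frame_pb : mink p b = 0;
  frame_np : mink n p = 0 }.

Lemma frame_det4 (a b n p : vec4) : frame a b n p -> det4 a b n p <> 0.
Proof.
  intros [HD Hnn Hpp Hna Hnb Hpa Hpb Hnp] H0.
  assert (G := det4_gram a b n p). rewrite H0 in G.
  unfold det4, det3, gram_row in G.
  rewrite (mink_sym b a), (mink_sym a n), (mink_sym b n), (mink_sym a p), (mink_sym b p),
    (mink_sym p n), Hnn, Hpp, Hna, Hnb, Hpa, Hpb, Hnp in G.
  apply HD; lra.
Qed.

Lemma frame_orth_zero (a b n p r : vec4) : frame a b n p ->
  mink r a = 0 -> mink r b = 0 -> mink r n = 0 -> mink r p = 0 ->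
  forall i, (i < 4)%nat -> r i = 0.
Proof.
  intros Hf Ha Hb Hn Hp.
  apply (mink_orth_zero a b n p r (frame_det4 a b n p Hf));
    rewrite mink_sym; assumption.
Qed.

Definition tangent_form (a b w z : vec4) : R :=
  (mink b b * mink w a * mink z a
   - mink a b * (mink w a * mink z b + mink w b * mink z a)
   + mink a a * mink w b * mink z b) / (mink a a * mink b b - mink a b ^ 2).

Lemma mink_comb_l (z a b n p y : vec4) (al be ga de : R) :
  mink (fun i => z i - (al * a i + be * b i + ga * n i - de * p i)) y =
  mink z y - (al * mink a y + be * mink b y + ga * mink n y - de * mink p y).
Proof. unfold mink; ring. Qed.

Lemma mink_lin_l (a b y : vec4) (p q : R) :
  mink (fun i => p * a i + q * b i) y = p * mink a y + q * mink b y.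
Proof. unfold mink; ring. Qed.

Lemma frame_parseval (a b n p w z : vec4) : frame a b n p ->
  mink w z = tangent_form a b w z + mink w n * mink z n - mink w p * mink z p.
Proof.
  intros Hf. pose proof Hf as [HD Hnn Hpp Hna Hnb Hpa Hpb Hnp].
  set (D := mink a a * mink b b - mink a b ^ 2) in *.
  set (al := (mink b b * mink z a - mink a b * mink z b) / D).
  set (be := (mink a a * mink z b - mink a b * mink z a) / D).
  set (z' := fun i => al * a i + be * b i + mink z n * n i - mink z p * p i).
  assert (Hz : forall i, (i < 4)%nat -> z i = z' i).
  { intros i Hi. apply Rminus_diag_uniq.
    apply (frame_orth_zero a b n p (fun i => z i - z' i) Hf); [..|exact Hi];
      unfold z'; rewrite mink_comb_l;
      rewrite ?(mink_sym b a), ?(mink_sym a n), ?(mink_sym b n), ?(mink_sym a p),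
        ?(mink_sym b p), ?(mink_sym p n), ?Hnn, ?Hpp, ?Hna, ?Hnb, ?Hpa, ?Hpb, ?Hnp;
      unfold al, be, D in *; field; exact HD. }
  rewrite (mink_ext w w z z') by easy.
  unfold z', tangent_form; fold D; unfold al, be, mink in *; field; exact HD.
Qed.

Lemma tangent_form_e3 (a b z : vec4) :
  tangent_form a b e3 z =
  (mink z a * (mink b b * a 3%nat - mink a b * b 3%nat)
   + mink z b * (mink a a * b 3%nat - mink a b * a 3%nat)) / (mink a a * mink b b - mink a b ^ 2).
Proof. unfold tangent_form; rewrite !mink_e3_l; unfold Rdiv; ring. Qed.

Lemma pair_neq0 (x y : R) : (x, y) <> (0, 0) -> x <> 0 \/ y <> 0.
Proof.
  intros H. destruct (Req_dec x 0) as [->|Hx]; [|now left].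
  right; intros ->; exact (H eq_refl).
Qed.

Lemma mult_eq0_neq0 (a x y : R) : a * x = 0 -> a * y = 0 -> (x, y) <> (0, 0) -> a = 0.
Proof.
  intros Hx Hy Hxy.
  destruct (pair_neq0 _ _ Hxy) as [H|H];
    [destruct (Rmult_integral _ _ Hx)|destruct (Rmult_integral _ _ Hy)]; tauto.
Qed.

Lemma trace2_eq_eigenvalue (s11 s12 s21 s22 c1 c2 d1 d2 k : R) :
  (c1, c2) <> (0, 0) -> s11 * c1 + s12 * c2 = 0 -> s21 * c1 + s22 * c2 = 0 ->
  (d1, d2) <> (0, 0) -> s11 * d1 + s12 * d2 = k * d1 -> s21 * d1 + s22 * d2 = k * d2 ->
  k <> 0 -> s11 + s22 = k.
Proof.
  intros Hc Hc1 Hc2 Hd Hd1 Hd2 Hk.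
  set (det := s11 * s22 - s12 * s21).
  assert (Hdet : det = 0).
  { assert (E1 : det * c1 = s22 * (s11 * c1 + s12 * c2) - s12 * (s21 * c1 + s22 * c2))
      by (unfold det; ring).
    assert (E2 : det * c2 = s11 * (s21 * c1 + s22 * c2) - s21 * (s11 * c1 + s12 * c2))
      by (unfold det; ring).
    rewrite Hc1, Hc2 in E1, E2.
    apply (mult_eq0_neq0 det c1 c2); [lra|lra|exact Hc]. }
  (* Cayley-Hamilton, applied to the eigenvector [d] *)
  assert (E1 : k * (k - (s11 + s22)) * d1 + det * d1 =
               (s22 - k) * (s11 * d1 + s12 * d2 - k * d1) - s12 * (s21 * d1 + s22 * d2 - k * d2))
    by (unfold det; ring).
  assert (E2 : k * (k - (s11 + s22)) * d2 + det * d2 =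
               (s11 - k) * (s21 * d1 + s22 * d2 - k * d2) - s21 * (s11 * d1 + s12 * d2 - k * d1))
    by (unfold det; ring).
  rewrite Hd1, Hd2 in E1, E2.
  rewrite Hdet in E1, E2.
  assert (Htr : k * (k - (s11 + s22)) = 0).
  { apply (mult_eq0_neq0 _ d1 d2); [lra|lra|exact Hd]. }
  destruct (Rmult_integral _ _ Htr); [contradiction|lra].
Qed.

Lemma quadform_pos_neq0 (E F G x y : R) : E * G - F ^ 2 > 0 -> (x, y) <> (0, 0) ->
  E * x ^ 2 + 2 * F * x * y + G * y ^ 2 <> 0.
Proof.
  intros HD Hxy HQ.
  assert (HE : E <> 0) by (intros ->; pose proof (pow2_ge_0 F); lra).
  assert (Hsq : E * (E * x ^ 2 + 2 * F * x * y + G * y ^ 2) = (E * x + F * y) ^ 2 + (E * G - F ^ 2) * y ^ 2)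
    by ring.
  rewrite HQ, Rmult_0_r in Hsq.
  assert (P1 := pow2_ge_0 (E * x + F * y)).
  assert (P2 : 0 <= (E * G - F ^ 2) * y ^ 2) by (apply Rmult_le_pos; [lra|apply pow2_ge_0]).
  assert (Hy : y = 0) by (apply Rsqr_0_uniq; apply (Rmult_eq_reg_l (E * G - F ^ 2)); unfold Rsqr; lra).
  subst y.
  assert (Hx : E * x = 0) by (apply Rsqr_0_uniq; unfold Rsqr; lra).
  destruct (Rmult_integral _ _ Hx) as [H0|H0]; [contradiction|subst x].
  apply Hxy; reflexivity.
Qed.

(* A symmetric form killing [(x, y) <> 0] is a multiple of [(y, -x)^2], whose
   trace relative to a definite [g] is nonzero. *)
Lemma sym2_kernel_trace_zero (E F G m11 m12 m22 x y : R) :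
  E * G - F ^ 2 > 0 -> (x, y) <> (0, 0) ->
  m11 * x + m12 * y = 0 -> m12 * x + m22 * y = 0 ->
  G * m11 - 2 * F * m12 + E * m22 = 0 ->
  m11 = 0 /\ m12 = 0 /\ m22 = 0.
Proof.
  intros HD Hxy H1 H2 Htr.
  set (Q := E * x ^ 2 + 2 * F * x * y + G * y ^ 2).
  assert (HQ : Q <> 0) by exact (quadform_pos_neq0 E F G x y HD Hxy).
  assert (E11 : m11 * Q = y ^ 2 * (G * m11 - 2 * F * m12 + E * m22)
                          + (E * x + 2 * F * y) * (m11 * x + m12 * y) - E * y * (m12 * x + m22 * y))
    by (unfold Q; ring).
  assert (E22 : m22 * Q = x ^ 2 * (G * m11 - 2 * F * m12 + E * m22)
                          + (G * y + 2 * F * x) * (m12 * x + m22 * y) - G * x * (m11 * x + m12 * y))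
    by (unfold Q; ring).
  rewrite H1, H2, Htr in E11, E22.
  assert (Z11 : m11 = 0) by (apply (Rmult_eq_reg_r Q); [lra|exact HQ]).
  assert (Z22 : m22 = 0) by (apply (Rmult_eq_reg_r Q); [lra|exact HQ]).
  subst m11 m22; split; [reflexivity|split; [|reflexivity]].
  apply (mult_eq0_neq0 m12 x y); [lra|lra|exact Hxy].
Qed.

(* In matrix form: if [h g^-1 a = 0] and [g^-1(a, a) = 1] then
   [h = tr (g^-1 h) (g - a a^T)]. *)
Lemma sym2_from_kernel (E F G h11 h12 h22 a1 a2 : R) :
  E * G - F ^ 2 > 0 ->
  h11 * (G * a1 - F * a2) + h12 * (E * a2 - F * a1) = 0 ->
  h12 * (G * a1 - F * a2) + h22 * (E * a2 - F * a1) = 0 ->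
  G * a1 ^ 2 - 2 * F * a1 * a2 + E * a2 ^ 2 = E * G - F ^ 2 ->
  let k := (G * h11 - 2 * F * h12 + E * h22) / (E * G - F ^ 2) in
  h11 = k * (E - a1 ^ 2) /\ h12 = k * (F - a1 * a2) /\ h22 = k * (G - a2 ^ 2).
Proof.
  intros HD H1 H2 Ha k.
  set (x := G * a1 - F * a2) in *. set (y := E * a2 - F * a1) in *.
  assert (Hxy : (x, y) <> (0, 0)).
  { intros Hz; injection Hz as Hx Hy.
    assert (a1 * x + a2 * y = E * G - F ^ 2) by (unfold x, y; rewrite <- Ha; ring).
    rewrite Hx, Hy in H; lra. }
  destruct (sym2_kernel_trace_zero E F G (h11 - k * (E - a1 ^ 2)) (h12 - k * (F - a1 * a2))
              (h22 - k * (G - a2 ^ 2)) x y HD Hxy) as (Z11 & Z12 & Z22).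
  - transitivity (h11 * x + h12 * y - k * a1 * (E * G - F ^ 2 - (G * a1 ^ 2 - 2 * F * a1 * a2 + E * a2 ^ 2)));
      [unfold x, y; ring|rewrite H1, Ha; ring].
  - transitivity (h12 * x + h22 * y - k * a2 * (E * G - F ^ 2 - (G * a1 ^ 2 - 2 * F * a1 * a2 + E * a2 ^ 2)));
      [unfold x, y; ring|rewrite H2, Ha; ring].
  - transitivity (G * h11 - 2 * F * h12 + E * h22 - k * (E * G - F ^ 2)
                  - k * (E * G - F ^ 2 - (G * a1 ^ 2 - 2 * F * a1 * a2 + E * a2 ^ 2)));
      [ring|rewrite Ha; unfold k; field; lra].
  - repeat split; lra.
Qed.

(* Brioschi's formula after splitting the inner products of second derivatives
   along the frame [(X_u, X_v, N, P)]: the tangential parts cancel, the normal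
   parts give the extrinsic curvature and the [P]-parts the ambient sectional
   curvature [-n3^2]. *)
Lemma gauss_equation_algebra (E F G uua uub uva uvb vva vvb h11 h12 h22 c11 c12 c22
    a3 b3 n3 uuvv uvuv K : R) :
  E * G - F ^ 2 <> 0 ->
  uuvv = (G * uua * vva - F * (uua * vvb + uub * vva) + E * uub * vvb) / (E * G - F ^ 2)
       + h11 * h22 - c11 * c22 ->
  uvuv = (G * uva * uva - F * (uva * uvb + uvb * uva) + E * uvb * uvb) / (E * G - F ^ 2)
       + h12 * h12 - c12 * c12 ->
  1 = (G * a3 * a3 - F * (a3 * b3 + b3 * a3) + E * b3 * b3) / (E * G - F ^ 2) + n3 * n3 ->
  c11 = - (E - a3 * a3) -> c12 = - (F - a3 * b3) -> c22 = - (G - b3 * b3) ->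
  K = (det3 (uuvv - uvuv) uua uub vva E F vvb F G - det3 0 uva uvb uva E F uvb F G)
      / (E * G - F ^ 2) ^ 2 ->
  K = (h11 * h22 - h12 ^ 2) / (E * G - F ^ 2) - n3 ^ 2.
Proof.
  intros HD H1 H2 H3 H4 H5 H6 HK.
  replace (n3 ^ 2) with
    (1 - (G * a3 * a3 - F * (a3 * b3 + b3 * a3) + E * b3 * b3) / (E * G - F ^ 2))
    by (rewrite H3; ring).
  rewrite HK, H1, H2, H4, H5, H6. unfold det3. field. exact HD.
Qed.

Lemma adj2_kernel (E F G x y : R) : E * G - F ^ 2 <> 0 ->
  (G * x - F * y) / (E * G - F ^ 2) = 0 -> (- F * x + E * y) / (E * G - F ^ 2) = 0 ->
  x = 0 /\ y = 0.
Proof.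
  intros HD H1 H2.
  assert (HI : / (E * G - F ^ 2) <> 0) by now apply Rinv_neq_0_compat.
  assert (Z1 : G * x - F * y = 0)
    by (apply (Rmult_eq_reg_r (/ (E * G - F ^ 2))); [rewrite Rmult_0_l; exact H1|exact HI]).
  assert (Z2 : - F * x + E * y = 0)
    by (apply (Rmult_eq_reg_r (/ (E * G - F ^ 2))); [rewrite Rmult_0_l; exact H2|exact HI]).
  split; apply (Rmult_eq_reg_l (E * G - F ^ 2)); try exact HD.
  - transitivity (E * (G * x - F * y) + F * (- F * x + E * y)); [ring|rewrite Z1, Z2; ring].
  - transitivity (F * (G * x - F * y) + G * (- F * x + E * y)); [ring|rewrite Z1, Z2; ring].
Qed.

Lemma pdw_app (w w' : list bool) (f : R -> R -> R) : pdw (w ++ w') f = pdw w (pdw w' f).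
Proof. induction w as [|[|] w IH]; simpl; rewrite ?IH; reflexivity. Qed.

Lemma smooth_on_pdw (U : R * R -> Prop) (f : R -> R -> R) (w : list bool) :
  smooth_on U f -> smooth_on U (pdw w f).
Proof. intros Hf w' p Hp. rewrite <- pdw_app. exact (Hf _ p Hp). Qed.

Definition slice {A : Type} (d : bool) (f : R -> R -> A) (u v : R) : R -> A :=
  fun t => if d then f t v else f u t.
Definition coord (d : bool) (u v : R) : R := if d then u else v.

Lemma pdw_cons (d : bool) (w : list bool) (f : R -> R -> R) (u v : R) :
  pdw (d :: w) f u v = Derive (slice d (pdw w f) u v) (coord d u v).
Proof. destruct d; reflexivity. Qed.

Lemma locally_slice (U : R * R -> Prop) (d : bool) (u v : R) : open U -> U (u, v) ->
  locally (coord d u v) (slice d (fun x y => U (x, y)) u v).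
Proof.
  intros HU Huv.
  assert (H2 : locally_2d (fun x y => U (x, y)) u v).
  { apply locally_2d_locally, (filter_imp U); [intros []; easy|exact (HU _ Huv)]. }
  destruct d; [exact (locally_2d_1d_const_y _ _ _ H2)|exact (locally_2d_1d_const_x _ _ _ H2)].
Qed.

Lemma slice_coord {A : Type} (d : bool) (f : R -> R -> A) (u v : R) :
  slice d f u v (coord d u v) = f u v.
Proof. destruct d; reflexivity. Qed.

Lemma is_derive_locally_neq0 (f : R -> R) (x l : R) : is_derive f x l -> f x <> 0 ->
  locally x (fun t => f t <> 0).
Proof.
  intros Hf Hx. apply (locally_pt_comp (fun y => y <> 0)); [exact (open_neq 0 _ Hx)|].
  apply continuity_pt_filterlim, (ex_derive_continuous f x), (ex_intro _ l Hf).
Qed.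

Section OpenSet.
Variable U : R * R -> Prop.
Hypothesis HU : open U.

Lemma Derive_slice_ext_on (f g : R -> R -> R) (d : bool) (u v : R) :
  (forall x y, U (x, y) -> f x y = g x y) -> U (u, v) ->
  Derive (slice d f u v) (coord d u v) = Derive (slice d g u v) (coord d u v).
Proof.
  intros Hfg Huv. apply Derive_ext_loc.
  apply (filter_imp (slice d (fun x y => U (x, y)) u v)); [|exact (locally_slice U d u v HU Huv)].
  intros t Ht; destruct d; apply Hfg; exact Ht.
Qed.

Lemma pdw_ext_on (f g : R -> R -> R) (w : list bool) (u v : R) :
  (forall x y, U (x, y) -> f x y = g x y) -> U (u, v) -> pdw w f u v = pdw w g u v.
Proof.
  intros Hfg. revert u v. induction w as [|d w IH]; intros u v Huv; [exact (Hfg u v Huv)|].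
  rewrite !pdw_cons. exact (Derive_slice_ext_on _ _ d u v IH Huv).
Qed.

Lemma is_derive_slice_const (f : R -> R -> R) (c l : R) (d : bool) (u v : R) :
  (forall x y, U (x, y) -> f x y = c) -> U (u, v) ->
  is_derive (slice d f u v) (coord d u v) l -> l = 0.
Proof.
  intros Hf Huv Hl. apply is_derive_unique in Hl. rewrite <- Hl.
  rewrite (Derive_slice_ext_on f (fun _ _ => c) d u v Hf Huv).
  destruct d; exact (Derive_const c _).
Qed.

Section Smooth.
Variable f : R -> R -> R.
Hypothesis Hf : smooth_on U f.

Lemma smooth_is_derive (w : list bool) (d : bool) (u v : R) : U (u, v) ->
  is_derive (slice d (pdw w f) u v) (coord d u v) (pdw (d :: w) f u v).
Proof.
  intros Huv. rewrite pdw_cons. apply Derive_correct.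
  destruct (Hf w (u, v) Huv) as (Hu & Hv & _); destruct d; assumption.
Qed.

Lemma smooth_continuity_2d (w : list bool) (u v : R) : U (u, v) ->
  continuity_2d_pt (pdw w f) u v.
Proof. intros Huv. apply continuity_2d_pt_filterlim, (Hf w (u, v) Huv). Qed.

Lemma smooth_pdw_comm (w : list bool) (u v : R) : U (u, v) ->
  pdw (true :: false :: w) f u v = pdw (false :: true :: w) f u v.
Proof.
  intros Huv. apply (Schwarz (pdw w f) u v).
  - apply locally_2d_locally.
    apply (filter_imp U); [|exact (HU _ Huv)]. intros [x y] Hxy.
    destruct (Hf w (x, y) Hxy) as (H1 & H2 & _).
    destruct (Hf (false :: w) (x, y) Hxy) as (H3 & _).
    destruct (Hf (true :: w) (x, y) Hxy) as (_ & H4 & _).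
    repeat split; assumption.
  - exact (smooth_continuity_2d (true :: false :: w) u v Huv).
  - exact (smooth_continuity_2d (false :: true :: w) u v Huv).
Qed.

End Smooth.

Lemma smooth_pdw_swap (f : R -> R -> R) (w1 w2 : list bool) (u v : R) :
  smooth_on U f -> U (u, v) ->
  pdw (w1 ++ true :: false :: w2) f u v = pdw (w1 ++ false :: true :: w2) f u v.
Proof.
  intros Hf Huv. rewrite !pdw_app.
  apply (pdw_ext_on _ _ w1 u v); [|exact Huv].
  intros x y Hxy. exact (smooth_pdw_comm f Hf w2 x y Hxy).
Qed.

Lemma smooth_ex_diff_n (f : R -> R -> R) (n : nat) (u v : R) :
  smooth_on U f -> U (u, v) -> ex_diff_n f n u v.
Proof.
  revert f. induction n as [|n IH]; intros f Hf Huv; simpl.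
  - split; [exact (smooth_continuity_2d f Hf nil u v Huv)|exact I].
  - destruct (Hf nil (u, v) Huv) as (Hu & Hv & _).
    repeat split; [exact (smooth_continuity_2d f Hf nil u v Huv)|exact Hu|exact Hv| |].
    + exact (IH (pdw [true] f) (smooth_on_pdw U f [true] Hf) Huv).
    + exact (IH (pdw [false] f) (smooth_on_pdw U f [false] Hf) Huv).
Qed.

(* The second-order Taylor expansion [Taylor_Lagrange_2d] has remainder
   [O(max(|x - u|, |y - v|)^2)]. *)
Lemma smooth_differentiable (f : R -> R -> R) (u v : R) :
  smooth_on U f -> U (u, v) ->
  differentiable_pt_lim f u v (pdw [true] f u v) (pdw [false] f u v).
Proof.
  intros Hf Huv eps.
  destruct (Taylor_Lagrange_2d f 1 u v) as [K [d1 HK]].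
  { apply locally_2d_locally, (filter_imp U); [|exact (HU _ Huv)].
    intros [x y] Hxy. exact (smooth_ex_diff_n f 2 x y Hf Hxy). }
  assert (Hd : 0 < Rmin d1 (eps / (Rabs K + 1))).
  { apply Rmin_pos; [apply cond_pos|apply Rdiv_lt_0_compat; [apply cond_pos|]].
    pose proof (Rabs_pos K); lra. }
  exists (mkposreal _ Hd). intros x y Hx Hy; simpl in Hx, Hy.
  specialize (HK x y (Rlt_le_trans _ _ _ Hx (Rmin_l _ _)) (Rlt_le_trans _ _ _ Hy (Rmin_l _ _))).
  assert (HT : DL_pol 1 f u v (x - u) (y - v)
               = f u v + (pdw [true] f u v * (x - u) + pdw [false] f u v * (y - v))).
  { change (pdw [true] f u v) with (Derive (fun t => f t v) u).
    change (pdw [false] f u v) with (Derive (fun t => f u t) v).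
    unfold DL_pol; simpl; unfold differential; simpl; unfold partial_derive; simpl;
      unfold Binomial.C; simpl; field. }
  set (m := Rmax (Rabs (x - u)) (Rabs (y - v))) in *.
  assert (Hm : m < eps / (Rabs K + 1)).
  { unfold m; apply Rmax_lub_lt; eapply Rlt_le_trans; [exact Hx|apply Rmin_r|exact Hy|apply Rmin_r]. }
  assert (Hm0 : 0 <= m) by (unfold m; eapply Rle_trans; [apply Rabs_pos|apply Rmax_l]).
  assert (HKm : K * m <= eps).
  { apply Rle_trans with ((Rabs K + 1) * m); [pose proof (Rle_abs K); nra|].
    apply Rlt_le. rewrite Rmult_comm. apply Rlt_div_r; [pose proof (Rabs_pos K); lra|exact Hm]. }
  replace (f x y - f u v - _) with (f x y - DL_pol 1 f u v (x - u) (y - v)) by (rewrite HT; ring).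
  eapply Rle_trans; [exact HK|]. simpl; nra.
Qed.

Lemma smooth_chain (f : R -> R -> R) (w : list bool) (cu cv : R -> R) (s du dv : R) :
  smooth_on U f -> U (cu s, cv s) -> is_derive cu s du -> is_derive cv s dv ->
  is_derive (fun t => pdw w f (cu t) (cv t)) s
    (pdw (true :: w) f (cu s) (cv s) * du + pdw (false :: w) f (cu s) (cv s) * dv).
Proof.
  intros Hf Hs Hu Hv. apply is_derive_Reals.
  apply derivable_pt_lim_comp_2d; [|apply is_derive_Reals; assumption..].
  exact (smooth_differentiable (pdw w f) _ _ (smooth_on_pdw U f w Hf) Hs).
Qed.

End OpenSet.

Definition pdv (w : list bool) (S : param) (u v : R) : vec4 := fun i => pdw w (S i) u v.

(* The [H^2]-component of a map into [H^2 x R] (coordinate 3 is the [R]-factor). *)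
Definition horiz (S : param) : param := fun i => if Nat.eqb i 3 then (fun _ _ => 0) else S i.

Lemma pdw_zero (w : list bool) (u v : R) : pdw w (fun _ _ => 0) u v = 0.
Proof.
  revert u v; induction w as [|d w IH]; intros u v; [reflexivity|].
  rewrite pdw_cons, (Derive_ext _ (fun _ => 0)) by (destruct d; intros; apply IH).
  apply Derive_const.
Qed.

Lemma pdv_horiz (w : list bool) (S : param) (u v : R) (i : nat) :
  pdv w (horiz S) u v i = if Nat.eqb i 3 then 0 else pdv w S u v i.
Proof. unfold pdv, horiz; destruct (Nat.eqb i 3); [apply pdw_zero|reflexivity]. Qed.

Lemma mink_horiz_r (a : vec4) (w : list bool) (S : param) (u v : R) :
  mink a (pdv w (horiz S) u v) = mink a (pdv w S u v) - a 3%nat * pdv w S u v 3%nat.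
Proof. unfold mink; rewrite !pdv_horiz; simpl; ring. Qed.

Lemma is_derive_mink (A B : R -> vec4) (x : R) (dA dB : vec4) :
  (forall i, (i < 4)%nat -> is_derive (fun t => A t i) x (dA i)) ->
  (forall i, (i < 4)%nat -> is_derive (fun t => B t i) x (dB i)) ->
  is_derive (fun t => mink (A t) (B t)) x (mink dA (B x) + mink (A x) dB).
Proof.
  intros HA HB.
  set (p i t := A t i * B t i).
  assert (HAB : forall i, (i < 4)%nat -> is_derive (p i) x (dA i * B x i + A x i * dB i)).
  { intros i Hi. apply (is_derive_mult (fun t => A t i) (fun t => B t i));
      [apply HA|apply HB|intros; apply Rmult_comm]; exact Hi. }
  apply (is_derive_ext (fun t => - p 0%nat t + p 1%nat t + p 2%nat t + p 3%nat t));
    [intro t; unfold p, mink; simpl; ring|].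
  replace (_ + _) with
    (- (dA 0%nat * B x 0%nat + A x 0%nat * dB 0%nat) + (dA 1%nat * B x 1%nat + A x 1%nat * dB 1%nat)
     + (dA 2%nat * B x 2%nat + A x 2%nat * dB 2%nat) + (dA 3%nat * B x 3%nat + A x 3%nat * dB 3%nat))
    by (unfold mink; ring).
  apply (is_derive_plus (fun t => - p 0%nat t + p 1%nat t + p 2%nat t) (p 3%nat));
    [apply (is_derive_plus (fun t => - p 0%nat t + p 1%nat t) (p 2%nat));
      [apply (is_derive_plus (fun t => - p 0%nat t) (p 1%nat)); [apply (is_derive_opp (p 0%nat))|]|]|];
    apply HAB; lia.
Qed.

Lemma slice_plus (f g : R -> R -> R) (d : bool) (u v : R) :
  slice d (fun x y => f x y + g x y) u v = fun t => slice d f u v t + slice d g u v t.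
Proof. destruct d; reflexivity. Qed.

Section SmoothMaps.
Variable U : R * R -> Prop.
Hypothesis HU : open U.

Definition smooth4 (S : param) : Prop := forall i, (i < 4)%nat -> smooth_on U (S i).

Lemma smooth_on_zero : smooth_on U (fun _ _ => 0).
Proof.
  intros w [u v] _; simpl.
  split; [|split].
  - apply (ex_derive_ext (fun _ => 0)); [intros; symmetry; apply pdw_zero|apply ex_derive_const].
  - apply (ex_derive_ext (fun _ => 0)); [intros; symmetry; apply pdw_zero|apply ex_derive_const].
  - apply (continuous_ext (fun _ => 0)); [intros; symmetry; apply pdw_zero|apply continuous_const].
Qed.

Lemma smooth4_horiz (S : param) : smooth4 S -> smooth4 (horiz S).
Proof.
  intros HS i Hi; unfold horiz; destruct (Nat.eqb i 3); [exact smooth_on_zero|exact (HS i Hi)].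
Qed.

Lemma pdv_swap (S : param) (w1 w2 : list bool) (u v : R) : smooth4 S -> U (u, v) ->
  forall i, (i < 4)%nat ->
  pdv (w1 ++ true :: false :: w2) S u v i = pdv (w1 ++ false :: true :: w2) S u v i.
Proof. intros HS Huv i Hi. exact (smooth_pdw_swap U HU (S i) w1 w2 u v (HS i Hi) Huv). Qed.

Section Mink.
Variables (S1 S2 : param) (w1 w2 : list bool).
Hypotheses (HS1 : smooth4 S1) (HS2 : smooth4 S2).

Lemma is_derive_slice_mink (d : bool) (u v : R) : U (u, v) ->
  is_derive (slice d (fun x y => mink (pdv w1 S1 x y) (pdv w2 S2 x y)) u v) (coord d u v)
    (mink (pdv (d :: w1) S1 u v) (pdv w2 S2 u v) + mink (pdv w1 S1 u v) (pdv (d :: w2) S2 u v)).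
Proof.
  intros Huv.
  pose proof (fun i Hi => smooth_is_derive U (S1 i) (HS1 i Hi) w1 d u v Huv) as D1.
  pose proof (fun i Hi => smooth_is_derive U (S2 i) (HS2 i Hi) w2 d u v Huv) as D2.
  destruct d; unfold slice, coord in *.
  - apply (is_derive_mink (fun t => pdv w1 S1 t v) (fun t => pdv w2 S2 t v)); assumption.
  - apply (is_derive_mink (fun t => pdv w1 S1 u t) (fun t => pdv w2 S2 u t)); assumption.
Qed.

Lemma pdw_mink (d : bool) (u v : R) : U (u, v) ->
  pdw [d] (fun x y => mink (pdv w1 S1 x y) (pdv w2 S2 x y)) u v =
  mink (pdv (d :: w1) S1 u v) (pdv w2 S2 u v) + mink (pdv w1 S1 u v) (pdv (d :: w2) S2 u v).
Proof. intros Huv. rewrite pdw_cons. apply is_derive_unique, is_derive_slice_mink, Huv. Qed.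

End Mink.

Lemma pdw2_mink (S1 S2 : param) (w1 w2 : list bool) (d e : bool) (u v : R) :
  smooth4 S1 -> smooth4 S2 -> U (u, v) ->
  pdw [e; d] (fun x y => mink (pdv w1 S1 x y) (pdv w2 S2 x y)) u v =
  mink (pdv (e :: d :: w1) S1 u v) (pdv w2 S2 u v) + mink (pdv (d :: w1) S1 u v) (pdv (e :: w2) S2 u v)
  + (mink (pdv (e :: w1) S1 u v) (pdv (d :: w2) S2 u v) + mink (pdv w1 S1 u v) (pdv (e :: d :: w2) S2 u v)).
Proof.
  intros HS1 HS2 Huv. rewrite pdw_cons.
  rewrite (Derive_slice_ext_on U HU _
    (fun x y => mink (pdv (d :: w1) S1 x y) (pdv w2 S2 x y) + mink (pdv w1 S1 x y) (pdv (d :: w2) S2 x y))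
    e u v (fun x y Hxy => pdw_mink S1 S2 w1 w2 HS1 HS2 d x y Hxy) Huv).
  apply is_derive_unique. rewrite slice_plus.
  apply (is_derive_plus (slice e (fun x y => mink (pdv (d :: w1) S1 x y) (pdv w2 S2 x y)) u v)
                         (slice e (fun x y => mink (pdv w1 S1 x y) (pdv (d :: w2) S2 x y)) u v));
    apply is_derive_slice_mink; assumption.
Qed.

End SmoothMaps.

Section Surface.
Variables (U : R * R -> Prop) (X N : param).
Hypotheses (HX : surface_in_H2xR U X) (HN : unit_normal U X N).

Lemma surface_open : open U.
Proof. exact (proj1 HX). Qed.

Lemma smooth_X : smooth4 U X.
Proof. exact (proj1 (proj2 HX)). Qed.

Lemma smooth_N : smooth4 U N.
Proof. exact (proj1 HN). Qed.

Lemma smooth_horiz_X : smooth4 U (horiz X).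
Proof. exact (smooth4_horiz U X smooth_X). Qed.

Local Notation P u v := (pdv [] (horiz X) u v).

Lemma first_form_mink (u v : R) :
  EE X u v = mink (pdv [true] X u v) (pdv [true] X u v) /\
  FF X u v = mink (pdv [true] X u v) (pdv [false] X u v) /\
  GG X u v = mink (pdv [false] X u v) (pdv [false] X u v).
Proof. repeat split. Qed.

Lemma hpos_coord3 (w : list bool) (u v : R) : pdv w (horiz X) u v 3%nat = 0.
Proof. rewrite pdv_horiz; reflexivity. Qed.

Lemma first_form_pos (u v : R) : U (u, v) ->
  0 < mink (pdv [true] X u v) (pdv [true] X u v) * mink (pdv [false] X u v) (pdv [false] X u v)
      - mink (pdv [true] X u v) (pdv [false] X u v) ^ 2.
Proof. intros Huv; exact (proj2 (proj2 (proj2 (proj2 HX) (u, v) Huv))). Qed.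

Lemma hpos_norm (u v : R) : U (u, v) -> mink (P u v) (P u v) = -1.
Proof.
  intros Huv. destruct (proj2 (proj2 HX) (u, v) Huv) as (H & _).
  unfold mink, pdv, horiz; simpl in *; lra.
Qed.

Lemma hpos_orth_tangent (d : bool) (u v : R) : U (u, v) -> mink (P u v) (pdv [d] X u v) = 0.
Proof.
  intros Huv.
  pose proof (is_derive_slice_mink U _ _ [] [] smooth_horiz_X smooth_horiz_X d u v Huv) as D.
  apply (is_derive_slice_const U surface_open _ (-1) _ d u v hpos_norm Huv) in D.
  rewrite (mink_sym (pdv [d] (horiz X) u v)), mink_horiz_r, hpos_coord3 in D. lra.
Qed.

Lemma hpos_second (d e : bool) (u v : R) : U (u, v) ->
  mink (pdv [e; d] X u v) (P u v) =
  - (mink (pdv [d] X u v) (pdv [e] X u v) - pdv [d] X u v 3%nat * pdv [e] X u v 3%nat).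
Proof.
  intros Huv.
  pose proof (is_derive_slice_mink U _ _ [d] [] smooth_X smooth_horiz_X e u v Huv) as D.
  apply (is_derive_slice_const U surface_open _ 0 _ e u v
           (fun x y Hxy => eq_trans (mink_sym _ _) (hpos_orth_tangent d x y Hxy)) Huv) in D.
  rewrite (mink_horiz_r (pdv [d] X u v)) in D. lra.
Qed.

Lemma normal_unit (u v : R) : U (u, v) -> mink (pdv [] N u v) (pdv [] N u v) = 1.
Proof. intros Huv; exact (proj1 (proj2 HN (u, v) Huv)). Qed.

Lemma normal_orth_tangent (d : bool) (u v : R) : U (u, v) -> mink (pdv [] N u v) (pdv [d] X u v) = 0.
Proof.
  intros Huv. destruct (proj2 HN (u, v) Huv) as (_ & Hu & Hv & _). destruct d; assumption.
Qed.

Lemma normal_orth_hpos (u v : R) : U (u, v) -> mink (pdv [] N u v) (P u v) = 0.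
Proof. intros Huv; exact (proj2 (proj2 (proj2 (proj2 HN (u, v) Huv)))). Qed.

Lemma tangent_frame (u v : R) : U (u, v) ->
  frame (pdv [true] X u v) (pdv [false] X u v) (pdv [] N u v) (P u v).
Proof.
  intros Huv; split.
  - pose proof (first_form_pos u v Huv); lra.
  - exact (normal_unit u v Huv).
  - exact (hpos_norm u v Huv).
  - exact (normal_orth_tangent true u v Huv).
  - exact (normal_orth_tangent false u v Huv).
  - exact (hpos_orth_tangent true u v Huv).
  - exact (hpos_orth_tangent false u v Huv).
  - exact (normal_orth_hpos u v Huv).
Qed.

Lemma normal_deriv_tangent (d e : bool) (u v : R) : U (u, v) ->
  mink (pdv [e] N u v) (pdv [d] X u v) = - mink (pdv [e; d] X u v) (pdv [] N u v).
Proof.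
  intros Huv.
  pose proof (is_derive_slice_mink U _ _ [] [d] smooth_N smooth_X e u v Huv) as D.
  apply (is_derive_slice_const U surface_open _ 0 _ e u v
           (fun x y Hxy => normal_orth_tangent d x y Hxy) Huv) in D.
  rewrite (mink_sym (pdv [] N u v)) in D. lra.
Qed.

Lemma normal_deriv_normal (e : bool) (u v : R) : U (u, v) ->
  mink (pdv [e] N u v) (pdv [] N u v) = 0.
Proof.
  intros Huv.
  pose proof (is_derive_slice_mink U _ _ [] [] smooth_N smooth_N e u v Huv) as D.
  apply (is_derive_slice_const U surface_open _ 1 _ e u v normal_unit Huv) in D.
  rewrite (mink_sym (pdv [] N u v)) in D. lra.
Qed.

Lemma normal_deriv_hpos (e : bool) (u v : R) : U (u, v) ->
  mink (pdv [e] N u v) (P u v) = N 3%nat u v * pdv [e] X u v 3%nat.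
Proof.
  intros Huv.
  pose proof (is_derive_slice_mink U _ _ [] [] smooth_N smooth_horiz_X e u v Huv) as D.
  apply (is_derive_slice_const U surface_open _ 0 _ e u v normal_orth_hpos Huv) in D.
  rewrite (mink_horiz_r (pdv [] N u v)), (normal_orth_tangent e u v Huv) in D.
  change (pdv [] N u v 3%nat) with (N 3%nat u v) in D. lra.
Qed.

Lemma parseval_e3 (z : vec4) (u v : R) : U (u, v) ->
  z 3%nat = tangent_form (pdv [true] X u v) (pdv [false] X u v) e3 z + N 3%nat u v * mink z (pdv [] N u v).
Proof.
  intros Huv.
  rewrite <- (mink_e3_l z), (frame_parseval _ _ _ _ e3 z (tangent_frame u v Huv)), !mink_e3_l, hpos_coord3.
  change (pdv [] N u v 3%nat) with (N 3%nat u v). ring.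
Qed.

Lemma brioschi_entries (u v : R) : U (u, v) ->
  let Xu := pdv [true] X u v in let Xv := pdv [false] X u v in
  let Xuu := pdv [true; true] X u v in let Xuv := pdv [false; true] X u v in
  let Xvv := pdv [false; false] X u v in
  - pd2 (pd2 (EE X)) u v / 2 + pd2 (pd1 (FF X)) u v - pd1 (pd1 (GG X)) u v / 2
    = mink Xuu Xvv - mink Xuv Xuv /\
  pd1 (EE X) u v / 2 = mink Xuu Xu /\
  pd1 (FF X) u v - pd2 (EE X) u v / 2 = mink Xuu Xv /\
  pd2 (FF X) u v - pd1 (GG X) u v / 2 = mink Xvv Xu /\
  pd2 (GG X) u v / 2 = mink Xvv Xv /\
  pd2 (EE X) u v / 2 = mink Xuv Xu /\
  pd1 (GG X) u v / 2 = mink Xuv Xv.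
Proof.
  intros Huv; cbv zeta.
  pose proof (pdw_mink U X X [true] [true] smooth_X smooth_X) as DE.
  pose proof (pdw_mink U X X [true] [false] smooth_X smooth_X) as DF.
  pose proof (pdw_mink U X X [false] [false] smooth_X smooth_X) as DG.
  pose proof (pdw2_mink U surface_open X X [true] [true] false false u v smooth_X smooth_X Huv) as DEvv.
  pose proof (pdw2_mink U surface_open X X [true] [false] true false u v smooth_X smooth_X Huv) as DFuv.
  pose proof (pdw2_mink U surface_open X X [false] [false] true true u v smooth_X smooth_X Huv) as DGuu.
  change (pd1 (EE X) u v) with
    (pdw [true] (fun x y => mink (pdv [true] X x y) (pdv [true] X x y)) u v).
  change (pd2 (EE X) u v) with
    (pdw [false] (fun x y => mink (pdv [true] X x y) (pdv [true] X x y)) u v).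
  change (pd1 (FF X) u v) with
    (pdw [true] (fun x y => mink (pdv [true] X x y) (pdv [false] X x y)) u v).
  change (pd2 (FF X) u v) with
    (pdw [false] (fun x y => mink (pdv [true] X x y) (pdv [false] X x y)) u v).
  change (pd1 (GG X) u v) with
    (pdw [true] (fun x y => mink (pdv [false] X x y) (pdv [false] X x y)) u v).
  change (pd2 (GG X) u v) with
    (pdw [false] (fun x y => mink (pdv [false] X x y) (pdv [false] X x y)) u v).
  change (pd2 (pd2 (EE X)) u v) with
    (pdw [false; false] (fun x y => mink (pdv [true] X x y) (pdv [true] X x y)) u v).
  change (pd2 (pd1 (FF X)) u v) with
    (pdw [false; true] (fun x y => mink (pdv [true] X x y) (pdv [false] X x y)) u v).
  change (pd1 (pd1 (GG X)) u v) with
    (pdw [true; true] (fun x y => mink (pdv [false] X x y) (pdv [false] X x y)) u v).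
  rewrite DEvv, DFuv, DGuu, !DE, !DF, !DG by exact Huv.
  assert (S2 : forall i, (i < 4)%nat -> pdv [true; false] X u v i = pdv [false; true] X u v i)
    by exact (pdv_swap U surface_open X [] [] u v smooth_X Huv).
  assert (S3 : forall i, (i < 4)%nat -> pdv [false; true; false] X u v i = pdv [false; false; true] X u v i)
    by exact (pdv_swap U surface_open X [false] [] u v smooth_X Huv).
  assert (S3' : forall i, (i < 4)%nat -> pdv [true; true; false] X u v i = pdv [false; true; true] X u v i).
  { intros i Hi. transitivity (pdv [true; false; true] X u v i).
    - exact (pdv_swap U surface_open X [true] [] u v smooth_X Huv i Hi).
    - exact (pdv_swap U surface_open X [] [true] u v smooth_X Huv i Hi). }
  unfold mink; rewrite !S2, !S3, !S3' by lia.
  repeat split; lra.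
Qed.

Lemma gauss_equation (u v : R) : U (u, v) ->
  gauss_curv X u v = extrinsic_curv X N u v - N 3%nat u v ^ 2.
Proof.
  intros Huv.
  destruct (brioschi_entries u v Huv) as (B1 & B2 & B3 & B4 & B5 & B6 & B7).
  pose proof (tangent_frame u v Huv) as Hf.
  pose proof (parseval_e3 e3 u v Huv) as He3.
  unfold tangent_form in He3; rewrite !mink_e3_l in He3.
  change (gauss_curv X u v = (h11 X N u v * h22 X N u v - h12 X N u v ^ 2)
                             / (EE X u v * GG X u v - FF X u v ^ 2) - N 3%nat u v ^ 2).
  eapply (gauss_equation_algebra _ _ _ _ _ _ _ _ _ _ _ _
           (mink (pdv [true; true] X u v) (P u v)) (mink (pdv [false; true] X u v) (P u v))
           (mink (pdv [false; false] X u v) (P u v))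
           (pdv [true] X u v 3%nat) (pdv [false] X u v 3%nat) _
           (mink (pdv [true; true] X u v) (pdv [false; false] X u v))
           (mink (pdv [false; true] X u v) (pdv [false; true] X u v))).
  - apply Rgt_not_eq, (first_form_pos u v Huv).
  - exact (frame_parseval _ _ _ _ _ _ Hf).
  - exact (frame_parseval _ _ _ _ _ _ Hf).
  - change (e3 3%nat) with 1 in He3. change (pdv [] N u v 3%nat) with (N 3%nat u v) in He3.
    destruct (first_form_mink u v) as (-> & -> & ->). lra.
  - exact (hpos_second true true u v Huv).
  - exact (hpos_second true false u v Huv).
  - exact (hpos_second false false u v Huv).
  - unfold gauss_curv; cbv zeta. rewrite B1, B2, B3, B4, B5, B6, B7. reflexivity.
Qed.

Lemma sff_comm (u v : R) : U (u, v) ->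
  mink (pdv [true; false] X u v) (pdv [] N u v) = h12 X N u v.
Proof.
  intros Huv. apply mink_ext; [|easy].
  exact (pdv_swap U surface_open X [] [] u v smooth_X Huv).
Qed.

Lemma asymptotic_dir_kernel (u v du dv : R) : U (u, v) -> asymptotic_dir X N u v (du, dv) ->
  mean_curv X N u v <> 0 /\
  h11 X N u v * du + h12 X N u v * dv = 0 /\ h12 X N u v * du + h22 X N u v * dv = 0.
Proof.
  intros Huv [[_ [k [Hk [[d1 d2] [Hd Hsd]]]]] [Hc Hsc]].
  pose proof (Rgt_not_eq _ _ (first_form_pos u v Huv)) as HD.
  change (EE X u v * GG X u v - FF X u v ^ 2 <> 0) in HD.
  pose proof (f_equal fst Hsc) as Hc1; pose proof (f_equal snd Hsc) as Hc2.
  pose proof (f_equal fst Hsd) as Hd1; pose proof (f_equal snd Hsd) as Hd2.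
  unfold shape in Hc1, Hc2, Hd1, Hd2; cbv zeta in Hc1, Hc2, Hd1, Hd2; cbn [fst snd] in Hc1, Hc2, Hd1, Hd2.
  change (detg X u v) with (EE X u v * GG X u v - FF X u v ^ 2) in Hc1, Hc2, Hd1, Hd2.
  rewrite Rmult_0_l in Hc1, Hc2.
  split; [|exact (adj2_kernel _ _ _ _ _ HD Hc1 Hc2)].
  set (D := EE X u v * GG X u v - FF X u v ^ 2) in *.
  (* the shape operator [g^-1 h] has eigenvalues [0] and [k], hence trace [k] *)
  assert (Htr : (GG X u v * h11 X N u v - FF X u v * h12 X N u v) / D
                + (- FF X u v * h12 X N u v + EE X u v * h22 X N u v) / D = k).
  { apply (trace2_eq_eigenvalue _ ((GG X u v * h12 X N u v - FF X u v * h22 X N u v) / D)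
             ((- FF X u v * h11 X N u v + EE X u v * h12 X N u v) / D) _ du dv d1 d2);
      try assumption; [rewrite <- Hc1|rewrite <- Hc2|rewrite <- Hd1|rewrite <- Hd2];
      unfold D; field; exact HD. }
  unfold mean_curv; change (detg X u v) with D. intro H0. apply Hk. rewrite <- Htr.
  replace (_ + _) with (2 * ((GG X u v * h11 X N u v - 2 * FF X u v * h12 X N u v
                              + EE X u v * h22 X N u v) / (2 * D))) by (field; exact HD).
  rewrite H0; ring.
Qed.

Hypothesis HNh : forall u v, U (u, v) -> N 3%nat u v = 0.

Lemma normal_pdv_vertical (w : list bool) (u v : R) : U (u, v) -> pdv w N u v 3%nat = 0.
Proof.
  intros Huv. unfold pdv.
  rewrite (pdw_ext_on U surface_open (N 3%nat) (fun _ _ => 0) w u v HNh Huv). apply pdw_zero.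
Qed.

(* With [N] horizontal, [e3] is a unit tangent vector: [g^-1(a, a) = 1] for
   its covector [a = (X_u 3, X_v 3)]. *)
Lemma vertical_unit (u v : R) : U (u, v) ->
  GG X u v * pdv [true] X u v 3%nat ^ 2
  - 2 * FF X u v * pdv [true] X u v 3%nat * pdv [false] X u v 3%nat
  + EE X u v * pdv [false] X u v 3%nat ^ 2 = EE X u v * GG X u v - FF X u v ^ 2.
Proof.
  intros Huv. pose proof (parseval_e3 e3 u v Huv) as H.
  rewrite tangent_form_e3, !mink_e3_l, (HNh u v Huv), Rmult_0_l, Rplus_0_r in H.
  change (e3 3%nat) with 1 in H. apply eq_sym, Rdiv_diag_uniq in H.
  destruct (first_form_mink u v) as (-> & -> & ->). lra.
Qed.

(* [N_d] has no vertical component, i.e. [h g^-1 a = 0]. *)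
Lemma normal_deriv_horizontal (d : bool) (u v : R) : U (u, v) ->
  let a1 := pdv [true] X u v 3%nat in let a2 := pdv [false] X u v 3%nat in
  mink (pdv [d] N u v) (pdv [true] X u v) * (GG X u v * a1 - FF X u v * a2)
  + mink (pdv [d] N u v) (pdv [false] X u v) * (EE X u v * a2 - FF X u v * a1) = 0.
Proof.
  intros Huv a1 a2. pose proof (parseval_e3 (pdv [d] N u v) u v Huv) as H.
  rewrite tangent_form_e3, normal_pdv_vertical, normal_deriv_normal,
    Rmult_0_r, Rplus_0_r in H by exact Huv.
  destruct (Rmult_integral _ _ (eq_sym H)) as [Z|Z].
  - destruct (first_form_mink u v) as (-> & -> & ->). exact Z.
  - exfalso; revert Z; apply Rinv_neq_0_compat, Rgt_not_eq, (first_form_pos u v Huv).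
Qed.

Lemma sff_horizontal (d e : bool) (u v : R) : U (u, v) ->
  mink (pdv [e; d] X u v) (pdv [] N u v) =
  2 * mean_curv X N u v * (mink (pdv [d] X u v) (pdv [e] X u v) - pdv [d] X u v 3%nat * pdv [e] X u v 3%nat).
Proof.
  intros Huv. pose proof (first_form_pos u v Huv) as HD.
  set (a1 := pdv [true] X u v 3%nat). set (a2 := pdv [false] X u v 3%nat).
  assert (Hk : (GG X u v * h11 X N u v - 2 * FF X u v * h12 X N u v + EE X u v * h22 X N u v)
               / (EE X u v * GG X u v - FF X u v ^ 2) = 2 * mean_curv X N u v)
    by (unfold mean_curv, detg; field; exact (Rgt_not_eq _ _ HD)).
  pose proof (normal_deriv_horizontal true u v Huv) as H1.
  pose proof (normal_deriv_horizontal false u v Huv) as H2.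
  cbv zeta in H1, H2. fold a1 a2 in H1, H2.
  rewrite !normal_deriv_tangent in H1, H2 by exact Huv.
  rewrite sff_comm in H1 by exact Huv.
  change (mink (pdv [true; true] X u v) (pdv [] N u v)) with (h11 X N u v) in H1.
  change (mink (pdv [false; true] X u v) (pdv [] N u v)) with (h12 X N u v) in H2.
  change (mink (pdv [false; false] X u v) (pdv [] N u v)) with (h22 X N u v) in H2.
  destruct (sym2_from_kernel (EE X u v) (FF X u v) (GG X u v) (h11 X N u v) (h12 X N u v)
              (h22 X N u v) a1 a2 HD) as (K11 & K12 & K22); [lra|lra|exact (vertical_unit u v Huv)|].
  cbv zeta in K11, K12, K22. rewrite Hk in K11, K12, K22.
  destruct d, e.
  - change (h11 X N u v = 2 * mean_curv X N u v * (EE X u v - a1 * a1)). rewrite K11; ring.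
  - change (h12 X N u v = 2 * mean_curv X N u v * (FF X u v - a1 * a2)). rewrite K12; ring.
  - rewrite sff_comm by exact Huv. rewrite mink_sym.
    change (h12 X N u v = 2 * mean_curv X N u v * (FF X u v - a2 * a1)). rewrite K12; ring.
  - change (h22 X N u v = 2 * mean_curv X N u v * (GG X u v - a2 * a2)). rewrite K22; ring.
Qed.

Lemma normal_deriv_rodrigues (d : bool) (u v : R) : U (u, v) ->
  forall i, (i < 4)%nat -> pdv [d] N u v i = - (2 * mean_curv X N u v) * pdv [d] (horiz X) u v i.
Proof.
  intros Huv. set (k := 2 * mean_curv X N u v).
  enough (Z : forall i, (i < 4)%nat -> 1 * pdv [d] N u v i + k * pdv [d] (horiz X) u v i = 0)
    by (intros i Hi; specialize (Z i Hi); lra).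
  assert (Ht : forall e, 1 * mink (pdv [d] N u v) (pdv [e] X u v) + k * mink (pdv [d] (horiz X) u v) (pdv [e] X u v) = 0).
  { intros e. rewrite normal_deriv_tangent, sff_horizontal, (mink_sym _ (pdv [e] X u v)), mink_horiz_r
      by exact Huv. unfold k; ring. }
  apply (frame_orth_zero _ _ _ _ _ (tangent_frame u v Huv)); rewrite mink_lin_l; [apply Ht|apply Ht| |].
  - rewrite normal_deriv_normal, (mink_sym _ (pdv [] N u v)), mink_horiz_r, normal_orth_tangent by exact Huv.
    rewrite normal_pdv_vertical by exact Huv. ring.
  - rewrite normal_deriv_hpos, HNh, (mink_sym _ (pdv [] (horiz X) u v)), mink_horiz_r, hpos_orth_tangent
      by exact Huv. rewrite hpos_coord3. ring.
Qed.

Lemma normal_deriv_rodrigues_coord (d : bool) (u v : R) (i : nat) : U (u, v) -> (i < 3)%nat ->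
  pdw [d] (N i) u v = - 2 * (mean_curv X N u v * pdw [d] (X i) u v).
Proof.
  intros Huv Hi. pose proof (normal_deriv_rodrigues d u v Huv i ltac:(lia)) as Hr.
  rewrite pdv_horiz in Hr. destruct (Nat.eqb_spec i 3); [lia|]. unfold pdv in Hr. lra.
Qed.

Lemma asymptotic_dir_vertical (u v du dv : R) : U (u, v) -> asymptotic_dir X N u v (du, dv) ->
  forall i, (i < 4)%nat -> du * pdv [true] (horiz X) u v i + dv * pdv [false] (horiz X) u v i = 0.
Proof.
  intros Huv Has.
  destruct (asymptotic_dir_kernel u v du dv Huv Has) as (HH & K1 & K2).
  change (h11 X N u v) with (mink (pdv [true; true] X u v) (pdv [] N u v)) in K1.
  change (h12 X N u v) with (mink (pdv [false; true] X u v) (pdv [] N u v)) in K1, K2.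
  change (h22 X N u v) with (mink (pdv [false; false] X u v) (pdv [] N u v)) in K2.
  rewrite !sff_horizontal in K1, K2 by exact Huv.
  set (k := 2 * mean_curv X N u v) in *.
  assert (Hk : k <> 0) by (unfold k; lra).
  set (a1 := pdv [true] X u v 3%nat) in *. set (a2 := pdv [false] X u v 3%nat) in *.
  assert (M1 : (mink (pdv [true] X u v) (pdv [true] X u v) - a1 * a1) * du
               + (mink (pdv [true] X u v) (pdv [false] X u v) - a1 * a2) * dv = 0)
    by (apply (Rmult_eq_reg_l k); [lra|exact Hk]).
  assert (M2 : (mink (pdv [true] X u v) (pdv [false] X u v) - a1 * a2) * du
               + (mink (pdv [false] X u v) (pdv [false] X u v) - a2 * a2) * dv = 0)
    by (apply (Rmult_eq_reg_l k); [lra|exact Hk]).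
  apply (frame_orth_zero _ _ _ _ _ (tangent_frame u v Huv)); rewrite mink_lin_l;
    rewrite !(mink_sym (pdv [_] (horiz X) u v)), !mink_horiz_r.
  - fold a1 a2. lra.
  - rewrite (mink_sym (pdv [false] X u v) (pdv [true] X u v)). fold a1 a2. lra.
  - rewrite !normal_orth_tangent by exact Huv.
    rewrite normal_pdv_vertical by exact Huv. ring.
  - rewrite !hpos_orth_tangent, hpos_coord3 by exact Huv. ring.
Qed.

Lemma mean_curv_ex_derive (d : bool) (u v : R) : U (u, v) ->
  ex_derive (slice d (mean_curv X N) u v) (coord d u v).
Proof.
  intros Huv.
  assert (Hm : forall S1 S2 w1 w2, smooth4 U S1 -> smooth4 U S2 ->
            ex_derive (slice d (fun x y => mink (pdv w1 S1 x y) (pdv w2 S2 x y)) u v) (coord d u v))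
    by (intros; eexists; apply (is_derive_slice_mink U); assumption).
  pose proof (first_form_pos u v Huv) as HD.
  replace (slice d (mean_curv X N) u v) with
    (fun t => (slice d (GG X) u v t * slice d (h11 X N) u v t
               - 2 * slice d (FF X) u v t * slice d (h12 X N) u v t
               + slice d (EE X) u v t * slice d (h22 X N) u v t)
              / (2 * (slice d (EE X) u v t * slice d (GG X) u v t - slice d (FF X) u v t ^ 2)))
    by (destruct d; reflexivity).
  pose proof (Hm X X [true] [true] smooth_X smooth_X) as DE.
  pose proof (Hm X X [true] [false] smooth_X smooth_X) as DF.
  pose proof (Hm X X [false] [false] smooth_X smooth_X) as DG.
  pose proof (Hm X N [true; true] [] smooth_X smooth_N) as D11.
  pose proof (Hm X N [false; true] [] smooth_X smooth_N) as D12.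
  pose proof (Hm X N [false; false] [] smooth_X smooth_N) as D22.
  auto_derive; repeat split; try assumption.
  rewrite !slice_coord. change (0 < EE X u v * GG X u v - FF X u v ^ 2) in HD. lra.
Qed.

Lemma normal_second_deriv (d e : bool) (u v : R) (i : nat) : U (u, v) -> (i < 3)%nat ->
  pdw [e; d] (N i) u v =
  - 2 * (pdw [e] (mean_curv X N) u v * pdw [d] (X i) u v
         + mean_curv X N u v * pdw [e; d] (X i) u v).
Proof.
  intros Huv Hi.
  rewrite pdw_cons, (Derive_slice_ext_on U surface_open _ _ e u v
    (fun x y Hxy => normal_deriv_rodrigues_coord d x y i Hxy Hi) Huv).
  apply is_derive_unique.
  pose proof (Derive_correct _ _ (mean_curv_ex_derive e u v Huv)) as DH.
  pose proof (smooth_is_derive U (X i) (smooth_X i ltac:(lia)) [d] e u v Huv) as DX.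
  pose proof (is_derive_scal _ _ (-2) _ (is_derive_mult _ _ _ _ _ DH DX Rmult_comm)) as D.
  rewrite !slice_coord in D. destruct e; exact D.
Qed.

Lemma codazzi (u v : R) (i : nat) : U (u, v) -> (i < 3)%nat ->
  pdw [true] (mean_curv X N) u v * pdw [false] (X i) u v =
  pdw [false] (mean_curv X N) u v * pdw [true] (X i) u v.
Proof.
  intros Huv Hi.
  pose proof (normal_second_deriv true false u v i Huv Hi) as Nuv.
  pose proof (normal_second_deriv false true u v i Huv Hi) as Nvu.
  rewrite (smooth_pdw_comm U surface_open (N i) (smooth_N i ltac:(lia)) [] u v Huv), Nuv,
    (smooth_pdw_comm U surface_open (X i) (smooth_X i ltac:(lia)) [] u v Huv) in Nvu.
  lra.
Qed.

Lemma tangent_horiz_nonzero (u v : R) : U (u, v) ->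
  exists d i, (i < 3)%nat /\ pdw [d] (X i) u v <> 0.
Proof.
  intros Huv. pose proof (first_form_pos u v Huv) as HD.
  destruct (Req_dec (pdw [true] (X 0%nat) u v) 0) as [a0|]; [|exists true, 0%nat; split; [lia|assumption]].
  destruct (Req_dec (pdw [true] (X 1%nat) u v) 0) as [a1|]; [|exists true, 1%nat; split; [lia|assumption]].
  destruct (Req_dec (pdw [true] (X 2%nat) u v) 0) as [a2|]; [|exists true, 2%nat; split; [lia|assumption]].
  destruct (Req_dec (pdw [false] (X 0%nat) u v) 0) as [b0|]; [|exists false, 0%nat; split; [lia|assumption]].
  destruct (Req_dec (pdw [false] (X 1%nat) u v) 0) as [b1|]; [|exists false, 1%nat; split; [lia|assumption]].
  destruct (Req_dec (pdw [false] (X 2%nat) u v) 0) as [b2|]; [|exists false, 2%nat; split; [lia|assumption]].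
  exfalso. unfold mink, pdv in HD. rewrite a0, a1, a2, b0, b1, b2 in HD. nra.
Qed.

Lemma mean_curv_deriv_vertical (u v du dv : R) : U (u, v) ->
  (forall i, (i < 4)%nat -> du * pdv [true] (horiz X) u v i + dv * pdv [false] (horiz X) u v i = 0) ->
  forall d i, (i < 3)%nat ->
  (pdw [true] (mean_curv X N) u v * du
   + pdw [false] (mean_curv X N) u v * dv) * pdw [d] (X i) u v = 0.
Proof.
  intros Huv Hvert d i Hi.
  specialize (Hvert i ltac:(lia)). rewrite !pdv_horiz in Hvert.
  destruct (Nat.eqb_spec i 3); [lia|]. unfold pdv in Hvert.
  pose proof (codazzi u v i Huv Hi) as C.
  set (Hu := pdw [true] (mean_curv X N) u v) in *.
  set (Hv := pdw [false] (mean_curv X N) u v) in *.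
  destruct d.
  - transitivity (Hu * (du * pdw [true] (X i) u v + dv * pdw [false] (X i) u v)
                  + dv * (Hv * pdw [true] (X i) u v - Hu * pdw [false] (X i) u v)); [ring|].
    rewrite Hvert, C; ring.
  - transitivity (Hv * (du * pdw [true] (X i) u v + dv * pdw [false] (X i) u v)
                  + du * (Hu * pdw [false] (X i) u v - Hv * pdw [true] (X i) u v)); [ring|].
    rewrite Hvert, C; ring.
Qed.

Lemma mean_curv_along_asymptotic (cu cv : R -> R) (s du dv : R) :
  is_derive cu s du -> is_derive cv s dv -> locally s (fun t => U (cu t, cv t)) ->
  asymptotic_dir X N (cu s) (cv s) (du, dv) ->
  is_derive (fun t => mean_curv X N (cu t) (cv t)) s 0.
Proof.
  intros Hu Hv HL Has. pose proof (locally_singleton _ _ HL) as Hs; cbv beta in Hs.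
  destruct (tangent_horiz_nonzero _ _ Hs) as (d & i & Hi & Hx).
  pose proof (smooth_chain U surface_open (X i) [d] cu cv s du dv (smooth_X i ltac:(lia)) Hs Hu Hv) as DX.
  pose proof (smooth_chain U surface_open (N i) [d] cu cv s du dv (smooth_N i ltac:(lia)) Hs Hu Hv) as DN.
  (* [H = - N_d,i / (2 X_d,i)] wherever [X_d,i <> 0], by Rodrigues *)
  apply (is_derive_ext_loc (fun t => - pdw [d] (N i) (cu t) (cv t) / (2 * pdw [d] (X i) (cu t) (cv t)))).
  { apply (filter_imp (fun t => U (cu t, cv t) /\ pdw [d] (X i) (cu t) (cv t) <> 0));
      [|exact (filter_and _ _ HL (is_derive_locally_neq0 _ _ _ DX Hx))].
    intros t [Ht Hxt].
    change (- pdw [d] (N i) (cu t) (cv t) / (2 * pdw [d] (X i) (cu t) (cv t))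
            = mean_curv X N (cu t) (cv t)).
    rewrite (normal_deriv_rodrigues_coord d _ _ i Ht Hi). field. exact Hxt. }
  set (x := pdw [d] (X i) (cu s) (cv s)) in *.
  set (x' := pdw [true; d] (X i) (cu s) (cv s) * du + pdw [false; d] (X i) (cu s) (cv s) * dv) in *.
  set (n' := pdw [true; d] (N i) (cu s) (cv s) * du + pdw [false; d] (N i) (cu s) (cv s) * dv) in *.
  assert (Hval : (- n' * (2 * x) - - pdw [d] (N i) (cu s) (cv s) * (2 * x')) / (2 * x) ^ 2 = 0).
  { pose proof (mean_curv_deriv_vertical _ _ du dv Hs (asymptotic_dir_vertical _ _ du dv Hs Has) d i Hi) as Z.
    set (dH := pdw [true] (mean_curv X N) (cu s) (cv s) * du
               + pdw [false] (mean_curv X N) (cu s) (cv s) * dv) in Z.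
    fold x in Z.
    unfold n', x'. rewrite (normal_deriv_rodrigues_coord d _ _ i Hs Hi), !normal_second_deriv by assumption.
    fold x. match goal with |- ?num / _ = 0 => replace num with (4 * x * (dH * x)) by (unfold dH; ring) end.
    rewrite Z. unfold Rdiv; ring. }
  rewrite <- Hval.
  apply (is_derive_div (fun t => - pdw [d] (N i) (cu t) (cv t)) (fun t => 2 * pdw [d] (X i) (cu t) (cv t)));
    [apply (is_derive_opp (fun t => pdw [d] (N i) (cu t) (cv t))), DN
    |apply (is_derive_scal (fun t => pdw [d] (X i) (cu t) (cv t))), DX|].
  apply Rmult_integral_contrapositive; split; [lra|exact Hx].
Qed.

End Surface.

Theorem mainTheorem3
  (U : R * R -> Prop) (X N : param)
  (HX : surface_in_H2xR U X) (HN : unit_normal U X N)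
  (Hext : forall p, U p -> extrinsic_curv X N (fst p) (snd p) = 0)
  (Hgauss : forall p, U p -> gauss_curv X (fst p) (snd p) = 0)
  (a b : R) (cu cv : R -> R) (Hab : a < b)
  (Hu : smooth1_on a b cu) (Hv : smooth1_on a b cv)
  (HinU : forall s, a < s < b -> U (cu s, cv s))
  (Harc : forall s, a < s < b ->
     mink (fun i => Derive (curve X cu cv i) s)
          (fun i => Derive (curve X cu cv i) s) = 1)
  (Hasym : forall s, a < s < b ->
     asymptotic_dir X N (cu s) (cv s) (Derive cu s, Derive cv s)) :
  exists dH : R -> R,
    forall s, a < s < b ->
      is_derive (fun t => / mean_curv X N (cu t) (cv t)) s (dH s) /\
      is_derive dH s 0.
Proof.
  assert (HNh : forall u v, U (u, v) -> N 3%nat u v = 0).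
  { intros u v Huv. pose proof (gauss_equation U X N HX HN u v Huv) as G.
    rewrite (Hgauss (u, v) Huv : gauss_curv X u v = 0), (Hext (u, v) Huv : extrinsic_curv X N u v = 0) in G.
    nra. }
  exists (fun _ => 0). intros s Hs. split; [|exact (is_derive_const 0 s)].
  assert (HL : locally s (fun t => U (cu t, cv t))).
  { apply (filter_imp (fun t => a < t < b)); [exact HinU|].
    exact (open_and _ _ (open_gt a) (open_lt b) s Hs). }
  pose proof (Derive_correct cu s (Hu 1%nat s Hs)) as Du.
  pose proof (Derive_correct cv s (Hv 1%nat s Hs)) as Dv.
  pose proof (mean_curv_along_asymptotic U X N HX HN HNh cu cv s _ _ Du Dv HL (Hasym s Hs)) as DH.
  pose proof (proj1 (asymptotic_dir_kernel U X N HX _ _ _ _ (HinU s Hs) (Hasym s Hs))) as HH.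
  replace 0 with (- 0 / mean_curv X N (cu s) (cv s) ^ 2) by (field; exact HH).
  exact (is_derive_inv _ _ _ DH HH).
Qed.
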